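(* Let $z_1(t),\dots,z_4(t)$ solve the system of Theorem 5.2 and let $u(t)>0$ satisfy $\dot u=2\big(|z_1|^2+|z_2|^2+|z_3|^2+|z_4|^2\big)u$. Then each of the quantities $$|z_1|^2-|z_2|^2+|z_3|^2-|z_4|^2,\quad z_1\bar z_2+z_3\bar z_4,\quad \mathrm{Re}(z_1z_4-z_2z_3),\quad z_1\bar z_3+z_2\bar z_4$$ is a constant multiple of $u$; the quantity $Q(z_1,z_2,z_3,z_4)$ is a constant multiple of $u^2$; and $\mathrm{Im}(z_1z_4-z_2z_3)$ satisfies $\frac{d}{dt}\mathrm{Im}(z_1z_4-z_2z_3)=-2\big(\sum_j|z_j|^2\big)\mathrm{Im}(z_1z_4-z_2z_3)$, hence is a constant multiple of $u^{-1}$.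
   Context: The system of Theorem 5.2 is: $\dot z_1=z_1(|z_1|^2+|z_2|^2+|z_3|^2-|z_4|^2)+2(\overline{z_1z_4-z_2z_3}+z_2z_3)\bar z_4$, $\dot z_2=z_2(|z_4|^2+|z_1|^2+|z_2|^2-|z_3|^2)-2(\overline{z_1z_4-z_2z_3}-z_1z_4)\bar z_3$, $\dot z_3=z_3(|z_3|^2+|z_4|^2+|z_1|^2-|z_2|^2)-2(\overline{z_1z_4-z_2z_3}-z_1z_4)\bar z_2$, $\dot z_4=z_4(|z_2|^2+|z_3|^2+|z_4|^2-|z_1|^2)+2(\overline{z_1z_4-z_2z_3}+z_2z_3)\bar z_1$. Define $Q(z_1,z_2,z_3,z_4)=(|z_1|^2-|z_2|^2+|z_3|^2-|z_4|^2)^2+4|z_1\bar z_2+z_3\bar z_4|^2=(|z_1|^2+|z_2|^2)^2+(|z_3|^2+|z_4|^2)^2+2|z_1\bar z_3+z_2\bar z_4|^2-2|z_1z_4-z_2z_3|^2$. *)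

From Stdlib Require Import Reals.
From Coquelicot Require Import Coquelicot.
Open Scope R_scope.

Definition nsq (z : C) : R := (Cmod z) ^ 2.

Definition Dz (z1 z2 z3 z4 : C) : C := (z1 * z4 - z2 * z3)%C.

(* Right-hand sides of the system of Theorem 5.2 *)
Definition F1 (z1 z2 z3 z4 : C) : C :=
  (z1 * RtoC (nsq z1 + nsq z2 + nsq z3 - nsq z4)
   + 2 * (Cconj (Dz z1 z2 z3 z4) + z2 * z3) * Cconj z4)%C.
Definition F2 (z1 z2 z3 z4 : C) : C :=
  (z2 * RtoC (nsq z4 + nsq z1 + nsq z2 - nsq z3)
   - 2 * (Cconj (Dz z1 z2 z3 z4) - z1 * z4) * Cconj z3)%C.
Definition F3 (z1 z2 z3 z4 : C) : C :=
  (z3 * RtoC (nsq z3 + nsq z4 + nsq z1 - nsq z2)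
   - 2 * (Cconj (Dz z1 z2 z3 z4) - z1 * z4) * Cconj z2)%C.
Definition F4 (z1 z2 z3 z4 : C) : C :=
  (z4 * RtoC (nsq z2 + nsq z3 + nsq z4 - nsq z1)
   + 2 * (Cconj (Dz z1 z2 z3 z4) + z2 * z3) * Cconj z1)%C.

(* Q, first expression in the paper's definition *)
Definition Qf (z1 z2 z3 z4 : C) : R :=
  (nsq z1 - nsq z2 + nsq z3 - nsq z4) ^ 2
  + 4 * nsq (z1 * Cconj z2 + z3 * Cconj z4)%C.

Definition inI (a b : Rbar) (t : R) : Prop := Rbar_lt a t /\ Rbar_lt t b.

From Stdlib Require Import Reals Lra Classical ssreflect.
From Coquelicot Require Import Coquelicot.
Open Scope R_scope.

(* Write S = |z1|^2 + |z2|^2 + |z3|^2 + |z4|^2.  Along a solution the quantities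
   |z1|^2 - |z2|^2 + |z3|^2 - |z4|^2, z1 conj(z2) + z3 conj(z4), Re(z1 z4 - z2 z3)
   and z1 conj(z3) + z2 conj(z4) all satisfy q' = 2 S q, the same linear law as u,
   while Im(z1 z4 - z2 z3) satisfies q' = -2 S q.  So q / u, resp. q u, has zero
   derivative and is constant on the interval.  Q is the square of the first
   quantity plus four times the squared modulus of the second, hence a constant
   multiple of u^2. *)

Definition grows_at (k : R) (q : R -> R) (t : R) : Prop := is_derive q t (k * q t).

Definition solves_at (z1 z2 z3 z4 : R -> C) (t : R) : Prop :=
  is_derive z1 t (F1 (z1 t) (z2 t) (z3 t) (z4 t)) /\
  is_derive z2 t (F2 (z1 t) (z2 t) (z3 t) (z4 t)) /\
  is_derive z3 t (F3 (z1 t) (z2 t) (z3 t) (z4 t)) /\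
  is_derive z4 t (F4 (z1 t) (z2 t) (z3 t) (z4 t)).

Definition sum_nsq (z1 z2 z3 z4 : C) : R := nsq z1 + nsq z2 + nsq z3 + nsq z4.
Definition alt_nsq (z1 z2 z3 z4 : C) : R := nsq z1 - nsq z2 + nsq z3 - nsq z4.
Definition cross (z1 z2 z3 z4 : C) : C := (z1 * Cconj z2 + z3 * Cconj z4)%C.

Lemma nsq_pair (x y : R) : nsq (x, y) = x ^ 2 + y ^ 2.
Proof. rewrite /nsq /Cmod [fst _]/= [snd _]/= pow2_sqrt; nra. Qed.

Lemma is_derive_coordinates (z : R -> C) (t : R) (v : C) :
  is_derive z t v ->
  exists x y : R -> R, (forall s, z s = (x s, y s)) /\
    is_derive x t (Re v) /\ is_derive y t (Im v).
Proof.
  move=> dz; exists (fun s => Re (z s)), (fun s => Im (z s)); split; last split.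
  - by move=> s; case: (z s).
  - exact: (filterdiff_comp z fst _ _ dz (filterdiff_linear _ is_linear_fst)).
  - exact: (filterdiff_comp z snd _ _ dz (filterdiff_linear _ is_linear_snd)).
Qed.

Lemma inI_between (a b : Rbar) (t0 t1 s : R) :
  inI a b t0 -> inI a b t1 -> t0 <= s <= t1 -> inI a b s.
Proof.
  move=> [a_t0 _] [_ t1_b] [t0_s s_t1]; split.
  - apply: Rbar_lt_le_trans a_t0 _; exact: t0_s.
  - apply: Rbar_le_lt_trans _ t1_b; exact: s_t1.
Qed.

Lemma is_derive_0_const (a b : Rbar) (g : R -> R) :
  (forall t, inI a b t -> is_derive g t 0) ->
  exists c, forall t, inI a b t -> g t = c.
Proof.
  move=> g'0; case: (classic (exists t0, inI a b t0)) => [[t0 I_t0] | empty]; last first.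
    by exists 0 => t I_t; case: empty; exists t.
  exists (g t0) => t I_t.
  case: (Rtotal_order t t0) => [lt_t_t0 | [-> // | lt_t0_t]].
  - apply: eq_is_derive lt_t_t0 => s s_in; apply: g'0; exact: inI_between I_t I_t0 s_in.
  - symmetry; apply: eq_is_derive lt_t0_t => s s_in; apply: g'0; exact: inI_between I_t0 I_t s_in.
Qed.

Lemma is_derive_div_same_growth (k : R) (q u : R -> R) (t : R) :
  grows_at k q t -> grows_at k u t -> u t <> 0 -> is_derive (fun s => q s / u s) t 0.
Proof.
  move=> dq du u_t; have -> : 0 = ((k * q t) * u t - q t * (k * u t)) / (u t) ^ 2 by field.
  exact: is_derive_div dq du u_t.
Qed.

Lemma is_derive_mul_opposite_growth (k : R) (q u : R -> R) (t : R) :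
  grows_at (- k) q t -> grows_at k u t -> is_derive (fun s => q s * u s) t 0.
Proof.
  move=> dq du; have -> : 0 = (- k * q t) * u t + q t * (k * u t) by ring.
  exact: Derive.is_derive_mult dq du.
Qed.

Section ProportionalityOnInterval.

Context {a b : Rbar} {k u : R -> R}.
Hypothesis u_pos : forall t, inI a b t -> 0 < u t.
Hypothesis u_grows : forall t, inI a b t -> grows_at (k t) u t.

Lemma proportional_of_grows_at {q : R -> R} :
  (forall t, inI a b t -> grows_at (k t) q t) ->
  exists c, forall t, inI a b t -> q t = c * u t.
Proof.
  move=> q_grows.
  have [c q_u] : exists c, forall t, inI a b t -> q t / u t = c.
    apply: is_derive_0_const => t It.
    apply: is_derive_div_same_growth (q_grows t It) (u_grows t It) _.
    by have := u_pos t It; lra.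
  exists c => t It; rewrite -(q_u t It); field.
  by have := u_pos t It; lra.
Qed.

Lemma inverse_proportional_of_decays_at {q : R -> R} :
  (forall t, inI a b t -> grows_at (- k t) q t) ->
  exists c, forall t, inI a b t -> q t = c / u t.
Proof.
  move=> q_decays.
  have [c qu] : exists c, forall t, inI a b t -> q t * u t = c.
    apply: is_derive_0_const => t It.
    exact: is_derive_mul_opposite_growth (q_decays t It) (u_grows t It).
  exists c => t It; rewrite -(qu t It); field.
  by have := u_pos t It; lra.
Qed.

Lemma C_proportional_of_grows_at {w : R -> C} :
  (forall t, inI a b t ->
     grows_at (k t) (fun s => Re (w s)) t /\ grows_at (k t) (fun s => Im (w s)) t) ->
  exists c : C, forall t, inI a b t -> w t = (c * RtoC (u t))%C.
Proof.
  move=> w_grows.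
  have [cr w_re] := proportional_of_grows_at (fun t It => proj1 (w_grows t It)).
  have [ci w_im] := proportional_of_grows_at (fun t It => proj2 (w_grows t It)).
  exists (cr, ci) => t It.
  apply: injective_projections => /=.
  - by rewrite -[fst _]/(Re _) (w_re t It); ring.
  - by rewrite -[snd _]/(Im _) (w_im t It); ring.
Qed.

End ProportionalityOnInterval.

Lemma Qf_scale (z1 z2 z3 z4 : C) (cA r : R) (cB : C) :
  alt_nsq z1 z2 z3 z4 = cA * r -> cross z1 z2 z3 z4 = (cB * RtoC r)%C ->
  Qf z1 z2 z3 z4 = (cA ^ 2 + 4 * nsq cB) * r ^ 2.
Proof.
  rewrite /Qf -/(alt_nsq z1 z2 z3 z4) -/(cross z1 z2 z3 z4) => -> ->.
  case: cB => p q; rewrite /= !nsq_pair /=; ring.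
Qed.

Section GrowthLaws.

Context {z1 z2 z3 z4 : R -> C} {t : R}.
Hypothesis sol : solves_at z1 z2 z3 z4 t.
Local Notation energy := (sum_nsq (z1 t) (z2 t) (z3 t) (z4 t)).

Ltac rewrite_coordinates :=
  repeat match goal with e : forall s, ?z s = _ |- context [?z _] => rewrite e end.

Ltac rewrite_derivatives :=
  repeat match goal with d : is_derive ?f t _ |- context [Derive ?f t] =>
    rewrite (is_derive_unique _ _ _ d) end.

(* Each growth law is a polynomial identity in the real coordinates of the z_j:
   pass to coordinates pointwise, differentiate, and let [ring] check it. *)
Ltac solve_growth :=
  case: sol => [/is_derive_coordinates [x1 [y1 [? [? ?]]]]
                [/is_derive_coordinates [x2 [y2 [? [? ?]]]]
                [/is_derive_coordinates [x3 [y3 [? [? ?]]]]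
                 /is_derive_coordinates [x4 [y4 [? [? ?]]]]]]];
  rewrite /grows_at; apply: is_derive_ext => [s|];
  [ by rewrite_coordinates; rewrite /alt_nsq /cross /Dz ?nsq_pair /=
  | auto_derive;
    [ by repeat split; eexists; eassumption
    | rewrite_derivatives; rewrite_coordinates;
      rewrite /F1 /F2 /F3 /F4 /Dz /alt_nsq /cross /sum_nsq !nsq_pair /=; ring ] ].

Lemma alt_nsq_grows :
  grows_at (2 * energy) (fun s => alt_nsq (z1 s) (z2 s) (z3 s) (z4 s)) t.
Proof. solve_growth. Qed.

Lemma cross_12_34_grows :
  grows_at (2 * energy) (fun s => Re (cross (z1 s) (z2 s) (z3 s) (z4 s))) t /\
  grows_at (2 * energy) (fun s => Im (cross (z1 s) (z2 s) (z3 s) (z4 s))) t.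
Proof. split; solve_growth. Qed.

Lemma cross_13_24_grows :
  grows_at (2 * energy) (fun s => Re (cross (z1 s) (z3 s) (z2 s) (z4 s))) t /\
  grows_at (2 * energy) (fun s => Im (cross (z1 s) (z3 s) (z2 s) (z4 s))) t.
Proof. split; solve_growth. Qed.

Lemma Dz_Re_grows :
  grows_at (2 * energy) (fun s => Re (Dz (z1 s) (z2 s) (z3 s) (z4 s))) t.
Proof. solve_growth. Qed.

Lemma Dz_Im_decays :
  grows_at (- (2 * energy)) (fun s => Im (Dz (z1 s) (z2 s) (z3 s) (z4 s))) t.
Proof. solve_growth. Qed.

End GrowthLaws.

Theorem mainTheorem9 (a b : Rbar) (z1 z2 z3 z4 : R -> C) (u : R -> R) :
  Rbar_lt a b ->
  (forall t, inI a b t ->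
     is_derive z1 t (F1 (z1 t) (z2 t) (z3 t) (z4 t)) /\
     is_derive z2 t (F2 (z1 t) (z2 t) (z3 t) (z4 t)) /\
     is_derive z3 t (F3 (z1 t) (z2 t) (z3 t) (z4 t)) /\
     is_derive z4 t (F4 (z1 t) (z2 t) (z3 t) (z4 t))) ->
  (forall t, inI a b t -> 0 < u t) ->
  (forall t, inI a b t ->
     is_derive u t (2 * (nsq (z1 t) + nsq (z2 t) + nsq (z3 t) + nsq (z4 t)) * u t)) ->
  (exists c : R, forall t, inI a b t ->
     nsq (z1 t) - nsq (z2 t) + nsq (z3 t) - nsq (z4 t) = c * u t) /\
  (exists c : C, forall t, inI a b t ->
     (z1 t * Cconj (z2 t) + z3 t * Cconj (z4 t))%C = (c * RtoC (u t))%C) /\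
  (exists c : R, forall t, inI a b t ->
     Re (Dz (z1 t) (z2 t) (z3 t) (z4 t)) = c * u t) /\
  (exists c : C, forall t, inI a b t ->
     (z1 t * Cconj (z3 t) + z2 t * Cconj (z4 t))%C = (c * RtoC (u t))%C) /\
  (exists c : R, forall t, inI a b t ->
     Qf (z1 t) (z2 t) (z3 t) (z4 t) = c * (u t) ^ 2) /\
  (forall t, inI a b t ->
     is_derive (fun s => Im (Dz (z1 s) (z2 s) (z3 s) (z4 s))) t
       (-2 * (nsq (z1 t) + nsq (z2 t) + nsq (z3 t) + nsq (z4 t))
           * Im (Dz (z1 t) (z2 t) (z3 t) (z4 t)))) /\
  (exists c : R, forall t, inI a b t ->
     Im (Dz (z1 t) (z2 t) (z3 t) (z4 t)) = c / u t).
Proof.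
  move=> _ sol u_pos u_grows.
  have {}sol : forall t, inI a b t -> solves_at z1 z2 z3 z4 t := sol.
  have {}u_grows : forall t, inI a b t ->
      grows_at (2 * sum_nsq (z1 t) (z2 t) (z3 t) (z4 t)) u t := u_grows.
  have [cA A_u] := proportional_of_grows_at u_pos u_grows
    (fun t It => alt_nsq_grows (sol t It)).
  have [cB B_u] := C_proportional_of_grows_at u_pos u_grows
    (fun t It => cross_12_34_grows (sol t It)).
  have [cC C_u] := C_proportional_of_grows_at u_pos u_grows
    (fun t It => cross_13_24_grows (sol t It)).
  have [cD D_u] := proportional_of_grows_at u_pos u_grows
    (fun t It => Dz_Re_grows (sol t It)).
  have [cI I_u] := inverse_proportional_of_decays_at u_pos u_grows
    (fun t It => Dz_Im_decays (sol t It)).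
  split; first by exists cA.
  split; first by exists cB.
  split; first by exists cD.
  split; first by exists cC.
  split; first by exists (cA ^ 2 + 4 * nsq cB) => t It; apply: Qf_scale (A_u t It) (B_u t It).
  split; last by exists cI.
  move=> t It; have := Dz_Im_decays (sol t It).
  by rewrite /grows_at Ropp_mult_distr_l -opp_IZR.
Qed.
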